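(* Let $n\geq 2$. Every 2-Jacobi subset of $S_n$ can be presented as a symmetric difference of finitely many Jacobi subsets of $S_n$.
   Context: A Lie ring is a Lie algebra over $\mathbb Z$. The left-normed bracket is $[a_1]=a_1$, $[a_1,\dots,a_n]=[[a_1,\dots,a_{n-1}],a_n]$. $S_n$ is the symmetric group on $\{1,\dots,n\}$. A subset $T\subseteq S_n$ is Jacobi if $\sum_{\sigma\in T}[a_{\sigma(1)},\dots,a_{\sigma(n)}]=0$ for all elements $a_1,\dots,a_n$ of every Lie ring, and 2-Jacobi if the same identity holds for all elements of every Lie algebra over the field $\mathbb Z/2$. *)

From mathcomp Require Import all_boot all_algebra all_fingroup.
Set Implicit Arguments. Unset Strict Implicit. Unset Printing Implicit Defensive.
Import GRing.Theory.
Local Open Scope ring_scope.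

Definition is_lie_ring (L : zmodType) (br : L -> L -> L) : Prop :=
  [/\ (forall x y z, br (x + y) z = br x z + br y z),
      (forall x y z, br x (y + z) = br x y + br x z),
      (forall x, br x x = 0) &
      (forall x y z, br x (br y z) + br y (br z x) + br z (br x y) = 0)].

Definition is_lie_algebra_F2 (L : lmodType 'F_2) (br : L -> L -> L) : Prop :=
  [/\ (forall (a : 'F_2) x y z, br (a *: x + y) z = a *: br x z + br y z),
      (forall (a : 'F_2) x y z, br x (a *: y + z) = a *: br x y + br x z),
      (forall x, br x x = 0) &
      (forall x y z, br x (br y z) + br y (br z x) + br z (br x y) = 0)].

Definition lnbr (L : zmodType) (br : L -> L -> L) (s : seq L) : L :=
  if s is x :: t then foldl br x t else 0.

Definition jacobi_sum n (L : zmodType) (br : L -> L -> L)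
    (T : {set {perm 'I_n}}) (a : 'I_n -> L) : L :=
  \sum_(s in T) lnbr br [seq a (s i) | i <- enum 'I_n].

Definition jacobi_set n (T : {set {perm 'I_n}}) : Prop :=
  forall (L : zmodType) (br : L -> L -> L), is_lie_ring br ->
    forall a : 'I_n -> L, jacobi_sum br T a = 0.

Definition jacobi2_set n (T : {set {perm 'I_n}}) : Prop :=
  forall (L : lmodType 'F_2) (br : L -> L -> L), is_lie_algebra_F2 br ->
    forall a : 'I_n -> L, jacobi_sum br T a = 0.

Definition symdiff (aT : finType) (A B : {set aT}) : {set aT} :=
  (A :\: B) :|: (B :\: A).

Definition symdiff_seq (aT : finType) (s : seq {set aT}) : {set aT} :=
  foldr (@symdiff aT) set0 s.

From mathcomp Require Import all_boot all_algebra all_fingroup.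
Set Implicit Arguments. Unset Strict Implicit. Unset Printing Implicit Defensive.
Import GRing.Theory.
Local Open Scope ring_scope.

(* Symmetric differences of Jacobi sets form a class closed under symmetric
   difference whose members are all 2-Jacobi. Modulo this class every set of
   permutations is congruent to a set of permutations fixing 0: if the word of s
   is u 0 v with u nonempty, then [u, 0, v] = - [[0, [u]], v], and expanding
   [0, [u]] by the Leibniz rule writes [a_s] as a signed sum of brackets of words
   starting with 0; a negative term becomes positive once the same word with its
   first two letters swapped, whose bracket has the opposite sign, is added to
   both sides. So a 2-Jacobi set differs from a symmetric difference of Jacobi
   sets by a 2-Jacobi set X of permutations fixing 0, and such an X is empty:
   for sg in X, send the letter in position k of the word of sg to the matrix
   unit E_(k,k+1) over Z/2; among the t fixing 0, the left-normed commutator of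
   the word of t has a nonzero corner entry exactly when t = sg. *)

Fixpoint expansion (T : Type) (r : seq T) : seq (bool * seq T) :=
  if r is y :: r' then
    if r' is [::] then [:: (false, [:: y])]
    else [seq (p.1, rcons p.2 y) | p <- expansion r'] ++
         [seq (~~ p.1, y :: p.2) | p <- expansion r']
  else [::].

Lemma expansion_cons (T : Type) (y : T) r : (0 < size r)%N ->
  expansion (y :: r) =
  [seq (p.1, rcons p.2 y) | p <- expansion r] ++
  [seq (~~ p.1, y :: p.2) | p <- expansion r].
Proof. by case: r. Qed.

Lemma expansion_perm (T : eqType) (r : seq T) p : p \in expansion r -> perm_eq p.2 r.
Proof.
elim: r p => [|y [|x r] IHr] p //=; first by rewrite inE => /eqP ->.
rewrite mem_cat => /orP[] /mapP[q /IHr q_r ->] /=.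
  by rewrite perm_rcons perm_cons.
by rewrite perm_cons.
Qed.

Lemma expansion_uniq (T : eqType) (r : seq T) : uniq r -> uniq (map snd (expansion r)).
Proof.
elim: r => [//|y [//|x r] IHr] /andP[y_notin r_uniq].
rewrite expansion_cons // map_cat -!map_comp cat_uniq.
rewrite (map_comp (rcons^~ y) snd) (map_comp (cons y) snd).
rewrite map_inj_uniq; last by move=> s1 s2 /rcons_inj[].
rewrite [uniq (map (cons y) _)]map_inj_uniq; last by move=> s1 s2 [].
rewrite IHr // andbT; apply/hasPn => _ /mapP[_ /mapP[q _ ->] ->].
apply/mapP => -[_ /mapP[p p_in ->]].
case: p.2 (expansion_perm p_in) => [|c s] p_perm; first by have := perm_size p_perm.
move=> [y_eq_c _]; move: y_notin.
by rewrite y_eq_c -(perm_mem p_perm) mem_head.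
Qed.

Lemma expansion_negative (T : eqType) (r : seq T) p :
  p \in expansion r -> p.1 -> (1 < size r)%N.
Proof. by case: r => [|y [|x r]] //; rewrite inE => /eqP ->. Qed.

Section LieRing.
Variables (L : zmodType) (br : L -> L -> L).
Hypothesis lieL : is_lie_ring br.

Lemma brDl x y z : br (x + y) z = br x z + br y z.
Proof. by case: lieL. Qed.

Lemma brDr x y z : br x (y + z) = br x y + br x z.
Proof. by case: lieL. Qed.

Lemma brxx x : br x x = 0.
Proof. by case: lieL. Qed.

Lemma br_jacobi x y z : br x (br y z) + br y (br z x) + br z (br x y) = 0.
Proof. by case: lieL. Qed.

Lemma br0l x : br 0 x = 0.
Proof. by apply: (addrI (br 0 x)); rewrite addr0 -brDl addr0. Qed.

Lemma br0r x : br x 0 = 0.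
Proof. by apply: (addrI (br x 0)); rewrite addr0 -brDr addr0. Qed.

Lemma brNl x y : br (- x) y = - br x y.
Proof. by apply/eqP; rewrite -addr_eq0 addrC -brDl addrN br0l. Qed.

Lemma brNr x y : br x (- y) = - br x y.
Proof. by apply/eqP; rewrite -addr_eq0 addrC -brDr addrN br0r. Qed.

Lemma brC x y : br y x = - br x y.
Proof.
apply/eqP; rewrite -addr_eq0; have := brxx (x + y).
by rewrite !brDl !brDr !brxx add0r addr0 addrC => ->.
Qed.

Lemma br_leibniz x y z : br x (br y z) = br (br x y) z - br (br x z) y.
Proof.
have := br_jacobi x y z.
rewrite (brC x z) brNr (brC (br x z) y) opprK (brC (br x y) z) => /eqP.
by rewrite -addrA addr_eq0 => /eqP ->; rewrite opprD opprK addrC.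
Qed.

Lemma foldl_brD x y l : foldl br (x + y) l = foldl br x l + foldl br y l.
Proof. by elim: l x y => //= z l IHl x y; rewrite brDl IHl. Qed.

Lemma foldl_br0 l : foldl br 0 l = 0.
Proof. by elim: l => //= z l IHl; rewrite br0l. Qed.

Lemma foldl_brN x l : foldl br (- x) l = - foldl br x l.
Proof. by elim: l x => //= z l IHl x; rewrite brNl IHl. Qed.

Lemma foldl_br_sum (I : Type) (r : seq I) (F : I -> L) l :
  foldl br (\sum_(i <- r) F i) l = \sum_(i <- r) foldl br (F i) l.
Proof.
elim: r => [|i r IHr]; first by rewrite !big_nil foldl_br0.
by rewrite !big_cons foldl_brD IHr.
Qed.

Lemma br_suml (I : Type) (r : seq I) (F : I -> L) y :
  br (\sum_(i <- r) F i) y = \sum_(i <- r) br (F i) y.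
Proof. exact: (foldl_br_sum r F [:: y]). Qed.

Definition sgn (b : bool) (x : L) := if b then - x else x.

Lemma sgnN b x : sgn (~~ b) x = - sgn b x.
Proof. by case: b; rewrite /= ?opprK. Qed.

Lemma foldl_br_sgn b x l : foldl br (sgn b x) l = sgn b (foldl br x l).
Proof. by case: b; rewrite /= ?foldl_brN. Qed.

Lemma br_sgnl b x y : br (sgn b x) y = sgn b (br x y).
Proof. exact: (foldl_br_sgn b x [:: y]). Qed.

Lemma sum_sgn (I : Type) (r : seq (bool * I)) (F : I -> L) :
  \sum_(p <- r) sgn p.1 (F p.2) =
  \sum_(p <- r | ~~ p.1) F p.2 - \sum_(p <- r | p.1) F p.2.
Proof.
elim: r => [|[[] i] r IHr]; first by rewrite !big_nil subr0.
  by rewrite !big_cons /= IHr opprD addrCA.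
by rewrite !big_cons /= IHr addrA.
Qed.

Variables (T : eqType) (a : T -> L).

Lemma br_lnbr_expansion u x : u != [::] ->
  br x (lnbr br (map a u)) =
  \sum_(p <- expansion (rev u)) sgn p.1 (foldl br x (map a p.2)).
Proof.
elim/last_ind: u x => [//|u y IHu] x _.
case: u IHu => [_ | z u IHu]; first by rewrite /= big_cons big_nil addr0.
rewrite rev_rcons expansion_cons ?size_rev // big_cat !big_map /=.
rewrite map_rcons foldl_rcons br_leibniz -/(lnbr br (map a (z :: u))).
rewrite (IHu x) // (IHu (br x (a y))) // br_suml -sumrN.
congr (_ + _); apply: eq_bigr => p _; last by rewrite sgnN.
by rewrite map_rcons foldl_rcons br_sgnl.
Qed.

Lemma lnbr_cat_expansion u v z : u != [::] ->
  lnbr br (map a (u ++ z :: v)) +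
  \sum_(p <- expansion (rev u)) sgn p.1 (lnbr br (map a (z :: p.2 ++ v))) = 0.
Proof.
case: u => [//|x u] _.
rewrite /= map_cat foldl_cat /= brC -[foldl br (a x) _]/(lnbr br (map a (x :: u))).
rewrite br_lnbr_expansion // foldl_brN foldl_br_sum addrC; apply/eqP.
by rewrite subr_eq0; apply/eqP/eq_bigr => p _; rewrite foldl_br_sgn map_cat foldl_cat.
Qed.

End LieRing.

Lemma in_symdiff (T : finType) (A B : {set T}) x :
  (x \in symdiff A B) = (x \in A) (+) (x \in B).
Proof. by rewrite !inE; case: (x \in A); case: (x \in B). Qed.

Lemma symdiffxx (T : finType) (A : {set T}) : symdiff A A = set0.
Proof. by apply/setP => x; rewrite in_symdiff addbb inE. Qed.

Lemma symdiffs0 (T : finType) (A : {set T}) : symdiff A set0 = A.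
Proof. by apply/setP => x; rewrite in_symdiff inE addbF. Qed.

Lemma symdiffKl (T : finType) (A B : {set T}) : symdiff A (symdiff A B) = B.
Proof. by apply/setP => x; rewrite !in_symdiff addKb. Qed.

Lemma symdiff_seq_cat (T : finType) (s1 s2 : seq {set T}) :
  symdiff_seq (s1 ++ s2) = symdiff (symdiff_seq s1) (symdiff_seq s2).
Proof.
apply/setP => x; elim: s1 => [|A s1 IHs1] /=; first by rewrite in_symdiff inE.
by rewrite !in_symdiff IHs1 in_symdiff addbA.
Qed.

Definition jacobi_span n (T : {set {perm 'I_n}}) : Prop :=
  exists2 Ts : seq {set {perm 'I_n}},
    (forall U, U \in Ts -> jacobi_set U) & T = symdiff_seq Ts.

Section JacobiSpan.
Variable n : nat.
Implicit Types T U : {set {perm 'I_n}}.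

Lemma jacobi_span0 : jacobi_span (set0 : {set {perm 'I_n}}).
Proof. by exists [::]. Qed.

Lemma jacobi_span_set T : jacobi_set T -> jacobi_span T.
Proof.
move=> jacT; exists [:: T]; last by rewrite /= symdiffs0.
by move=> U; rewrite inE => /eqP ->.
Qed.

Lemma jacobi_span_symdiff T U :
  jacobi_span T -> jacobi_span U -> jacobi_span (symdiff T U).
Proof.
move=> [Ts jacTs ->] [Us jacUs ->]; exists (Ts ++ Us); last by rewrite symdiff_seq_cat.
by move=> V; rewrite mem_cat => /orP[/jacTs|/jacUs].
Qed.

Lemma jacobi_sumU (L : zmodType) (br : L -> L -> L) T U (a : 'I_n -> L) :
  [disjoint T & U] -> jacobi_sum br (T :|: U) a = jacobi_sum br T a + jacobi_sum br U a.
Proof.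
move=> disTU; rewrite /jacobi_sum -bigU //; apply: eq_bigl => s.
by rewrite !inE.
Qed.

End JacobiSpan.

Section Words.
Variable n : nat.
Implicit Types (s t : {perm 'I_n}) (w : seq 'I_n) (P : seq (seq 'I_n)).

Definition perm_word s : seq 'I_n := [seq s i | i <- enum 'I_n].

Definition perms_of P : {set {perm 'I_n}} := [set s | perm_word s \in P].

Lemma perm_word_inj : injective perm_word.
Proof. by move=> s t /eq_in_map eq_st; apply/permP => i; apply: eq_st; rewrite mem_enum. Qed.

Lemma perm_word_enum s : perm_eq (perm_word s) (enum 'I_n).
Proof.
apply: uniq_perm; first by rewrite map_inj_uniq ?enum_uniq //; exact: perm_inj.
  exact: enum_uniq.
by move=> i; rewrite mem_enum -[i](permKV s) map_f ?mem_enum.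
Qed.

Lemma perm_word_uniq s : uniq (perm_word s).
Proof. by rewrite (perm_uniq (perm_word_enum s)) enum_uniq. Qed.

Lemma perm_wordP w : perm_eq w (enum 'I_n) -> {s | perm_word s = w}.
Proof.
case: w => [|x0 w'] w_enum.
  by exists 1%g; apply: size0nil; rewrite size_map -(perm_size w_enum).
set w := x0 :: w' in w_enum *.
have w_uniq : uniq w by rewrite (perm_uniq w_enum) enum_uniq.
have size_w : size w = n by rewrite (perm_size w_enum) size_enum_ord.
have nth_inj : injective (fun i : 'I_n => nth x0 w i).
  by move=> i j /eqP; rewrite nth_uniq ?size_w // => /eqP /val_inj.
exists (perm nth_inj); rewrite /perm_word (eq_map (permE nth_inj)).
by rewrite -[RHS](mkseq_nth x0 w) size_w /mkseq -val_enum_ord -map_comp.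
Qed.

Lemma jacobi_sumE (L : zmodType) (br : L -> L -> L) T (a : 'I_n -> L) :
  jacobi_sum br T a = \sum_(s in T) lnbr br (map a (perm_word s)).
Proof. by rewrite /jacobi_sum; apply: eq_bigr => s _; rewrite /perm_word -(map_comp a s). Qed.

Lemma jacobi_sum_perms_of (L : zmodType) (br : L -> L -> L) P (a : 'I_n -> L) :
  uniq P -> {in P, forall w, perm_eq w (enum 'I_n)} ->
  jacobi_sum br (perms_of P) a = \sum_(w <- P) lnbr br (map a w).
Proof.
move=> P_uniq P_enum; rewrite jacobi_sumE.
rewrite -(big_image _ _ perm_word _ (fun w => lnbr br (map a w))); apply: perm_big.
apply: uniq_perm => //; first by rewrite map_inj_uniq ?enum_uniq //; exact: perm_word_inj.
move=> w; apply/imageP/idP => [[s] | w_P]; first by rewrite inE => ? ->.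
by have [s s_w] := perm_wordP (P_enum w w_P); exists s; rewrite // inE s_w.
Qed.

End Words.

Lemma perm_word_cons n (s : {perm 'I_n.+1}) :
  perm_word s = s ord0 :: [seq s (lift ord0 i) | i <- enum 'I_n].
Proof. by rewrite /perm_word enum_ordSl /= -map_comp. Qed.

Section FirstTransposition.
Variable m : nat.
Implicit Types (s t : {perm 'I_m.+2}) (P N : {set {perm 'I_m.+2}}).

Local Notation ord1 := (lift ord0 ord0 : 'I_m.+2).
Local Notation tau := (tperm ord0 ord1).

Lemma perm_wordE s :
  perm_word s = s ord0 :: s ord1 :: [seq s (lift ord0 (lift ord0 i)) | i <- enum 'I_m].
Proof. by rewrite perm_word_cons enum_ordSl /= -map_comp. Qed.

Lemma lnbr_tperm01 (L : zmodType) (br : L -> L -> L) (a : 'I_m.+2 -> L) s :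
  is_lie_ring br ->
  lnbr br (map a (perm_word (tau * s)%g)) = - lnbr br (map a (perm_word s)).
Proof.
move=> lieL; rewrite !perm_wordE !permM tpermL tpermR /= (brC lieL) (foldl_brN lieL).
congr (- foldl _ _ (map a _)); apply/eq_map => i.
by rewrite permM tpermD // -val_eqE /= /bump.
Qed.

Lemma jacobi_sum_tperm01 (L : zmodType) (br : L -> L -> L) (a : 'I_m.+2 -> L) N :
  is_lie_ring br -> jacobi_sum br [set tau * s | s in N]%g a = - jacobi_sum br N a.
Proof.
move=> lieL; rewrite !jacobi_sumE big_imset /=; last by move=> s t _ _; apply: mulgI.
by rewrite -sumrN; apply: eq_bigr => s _; rewrite lnbr_tperm01.
Qed.

Lemma tperm01_stab0 t : t ord0 = ord0 -> (tau * t)%g ord0 != ord0.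
Proof. by move=> t0; rewrite permM tpermL -{2}t0 (inj_eq perm_inj). Qed.

(* Since [a_(tau s)] = - [a_s], both P :|: tau N and N :|: tau N are Jacobi sets,
   and their symmetric difference is P :|: N. *)
Lemma jacobi_span_relation P N :
  let tauN := [set tau * s | s in N]%g in
  [disjoint P & N] -> [disjoint tauN & P] -> [disjoint tauN & N] ->
  (forall (L : zmodType) (br : L -> L -> L), is_lie_ring br ->
     forall a, jacobi_sum br P a = jacobi_sum br N a) ->
  jacobi_span (P :|: N).
Proof.
move=> tauN disPN disP disN sumPN.
have -> : P :|: N = symdiff (P :|: tauN) (N :|: tauN).
  apply/setP => s; rewrite in_symdiff !inE.
  have [s_tauN | s_tauN] := boolP (s \in tauN).
    by rewrite (disjointFr disP s_tauN) (disjointFr disN s_tauN).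
  rewrite !orbF; case s_P: (s \in P) => //=.
  by rewrite (disjointFr disPN s_P).
apply: jacobi_span_symdiff; apply: jacobi_span_set => L br lieL a;
  by rewrite jacobi_sumU ?jacobi_sum_tperm01 ?sumPN ?subrr // disjoint_sym.
Qed.

End FirstTransposition.

Definition stab0 n := [set s : {perm 'I_n.+1} | s ord0 == ord0].

Section ReductionToStab0.
Variable m : nat.
Local Notation ord1 := (lift ord0 ord0 : 'I_m.+2).
Local Notation tau := (tperm ord0 ord1).

Variables (s : {perm 'I_m.+2}) (u v : seq 'I_m.+2).
Hypotheses (word_s : perm_word s = u ++ ord0 :: v) (s0 : s ord0 != ord0).

Let E := expansion (rev u).
Let f (p : bool * seq 'I_m.+2) := ord0 :: p.2 ++ v.
Let words (Q : pred (bool * seq 'I_m.+2)) := [seq f p | p <- E & Q p].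
Let Ppos := perms_of (words (predC fst)).
Let Nneg := perms_of (words fst).

Let word_s_uniq : uniq (u ++ ord0 :: v).
Proof. by rewrite -word_s perm_word_uniq. Qed.

Let u_neq0 : u != [::].
Proof. by apply: contra s0 => /eqP u0; move: word_s; rewrite u0 perm_wordE => -[->]. Qed.

Let expansion_word_enum p : p \in E -> perm_eq (f p) (enum 'I_m.+2).
Proof.
move=> p_E; apply: perm_trans (perm_word_enum s); rewrite word_s perm_sym.
rewrite -[ord0 :: v]cat1s perm_catCA /= perm_cons perm_cat2r perm_sym.
by rewrite (perm_trans (expansion_perm p_E)) ?perm_rev.
Qed.

Let expansion_words_uniq : uniq (map f E).
Proof.
rewrite (map_comp (fun w => ord0 :: w ++ v) snd) map_inj_uniq.
  by rewrite expansion_uniq // rev_uniq; move: word_s_uniq; rewrite cat_uniq => /andP[].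
move=> w1 w2 [] eq_w; have /addIn size_w : (size w1 + size v = size w2 + size v)%N.
  by rewrite -!size_cat eq_w.
by move/eqP: eq_w; rewrite eqseq_cat // => /andP[/eqP].
Qed.

Let words_uniq Q : uniq (words Q).
Proof. exact: subseq_uniq (map_subseq f (filter_subseq Q E)) expansion_words_uniq. Qed.

Let perms_of_words0 Q t : t \in perms_of (words Q) -> t ord0 = ord0.
Proof. by rewrite inE perm_wordE => /mapP[p _ [->]]. Qed.

Let words_enum Q : {in words Q, forall w, perm_eq w (enum 'I_m.+2)}.
Proof. by move=> w /mapP[p]; rewrite mem_filter => /andP[_ /expansion_word_enum] ? ->. Qed.

Let words_disjoint : ~~ has (mem (words fst)) (words (predC fst)).
Proof.
have := expansion_words_uniq; rewrite -(perm_uniq (perm_map f (permEl (perm_filterC fst E)))).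
by rewrite map_cat cat_uniq => /and3P[].
Qed.

Let s_notin_words Q : s \notin perms_of (words Q).
Proof. by apply: contra s0 => /perms_of_words0 ->. Qed.

Let ord0_notin_u : ord0 \notin u.
Proof. by move: word_s_uniq; rewrite cat_uniq /= => /and3P[_ /norP[]]. Qed.

Let expansion_relation (L : zmodType) (br : L -> L -> L) (a : 'I_m.+2 -> L) :
  is_lie_ring br -> jacobi_sum br (s |: Ppos) a = jacobi_sum br Nneg a.
Proof.
move=> lieL; rewrite jacobi_sumU ?disjoints1 ?s_notin_words //.
rewrite !jacobi_sum_perms_of ?words_uniq //; try exact: words_enum.
rewrite jacobi_sumE big_set1 word_s /words !big_map !big_filter.
have := lnbr_cat_expansion lieL a v ord0 u_neq0.
rewrite (sum_sgn _ (fun w => lnbr br (map a (ord0 :: w ++ v)))) addrA.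
by move/eqP; rewrite subr_eq0 => /eqP.
Qed.

Let expansion_disjoint : [disjoint s |: Ppos & Nneg].
Proof.
rewrite disjoints_subset; apply/subsetP => t; rewrite in_setC => /setU1P[-> | t_P].
  exact: s_notin_words.
apply: contra words_disjoint => t_N; apply/hasP; exists (perm_word t).
  by rewrite inE in t_P.
by rewrite inE in t_N.
Qed.

Let s1_neq0 : (1 < size u)%N -> s ord1 != ord0.
Proof.
move=> size_u; have := congr1 (nth ord0 ^~ 1) word_s.
rewrite perm_wordE nth_cat size_u /= => ->.
by apply: contraNneq ord0_notin_u => <-; rewrite mem_nth.
Qed.

Let tperm01_disjoint_Nneg : [disjoint [set tau * t | t in Nneg]%g & Nneg].
Proof.
rewrite disjoints_subset; apply/subsetP => _ /imsetP[t /perms_of_words0 t0 ->].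
by rewrite in_setC; apply: contra (tperm01_stab0 t0) => /perms_of_words0 ->.
Qed.

Let tperm01_disjoint_Ppos : [disjoint [set tau * t | t in Nneg]%g & s |: Ppos].
Proof.
rewrite disjoints_subset; apply/subsetP => _ /imsetP[t t_N ->].
have t0 := perms_of_words0 t_N.
rewrite in_setC in_setU1 negb_or; apply/andP; split; last first.
  by apply: contra (tperm01_stab0 t0) => /perms_of_words0 ->.
apply: contraTneq t_N => s_tau; rewrite inE; apply/mapP => -[p].
rewrite mem_filter => /andP[p_neg p_E] _.
have size_u : (1 < size u)%N by rewrite -size_rev (expansion_negative p_E).
by move: (s1_neq0 size_u); rewrite -s_tau permM tpermR t0 eqxx.
Qed.

Lemma stab0_reduction_word :
  exists2 X : {set {perm 'I_m.+2}},
    X \subset stab0 m.+1 & jacobi_span (symdiff [set s] X).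
Proof.
exists (Ppos :|: Nneg).
  by apply/subsetP => t /setUP[] /perms_of_words0 t0; rewrite inE t0.
have -> : symdiff [set s] (Ppos :|: Nneg) = (s |: Ppos) :|: Nneg.
  apply/setP => t; rewrite in_symdiff !in_setU in_set1.
  by have [-> | _] := eqVneq t s; rewrite ?(negbTE (s_notin_words _)).
apply: jacobi_span_relation expansion_disjoint tperm01_disjoint_Ppos
  tperm01_disjoint_Nneg _ => L br lieL a.
exact: expansion_relation.
Qed.

End ReductionToStab0.

Lemma stab0_reduction_perm m (s : {perm 'I_m.+2}) :
  exists2 X : {set {perm 'I_m.+2}}, X \subset stab0 m.+1 & jacobi_span (symdiff [set s] X).
Proof.
have [s0 | s0] := eqVneq (s ord0) ord0.
  exists [set s]; first by rewrite sub1set inE s0.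
  by rewrite symdiffxx; apply: jacobi_span0.
have s_ord0 : ord0 \in perm_word s by rewrite (perm_mem (perm_word_enum s)) mem_enum.
case/splitPr word_s: (perm_word s) / s_ord0 => [u v].
exact: stab0_reduction_word word_s s0.
Qed.

Lemma stab0_reduction m (T : {set {perm 'I_m.+2}}) :
  exists2 X : {set {perm 'I_m.+2}}, X \subset stab0 m.+1 & jacobi_span (symdiff T X).
Proof.
have -> : T = [set s in enum T] by apply/setP => s; rewrite inE mem_enum.
elim: (enum T) (enum_uniq (mem T)) => [_ | s r IHr /= /andP[s_r /IHr[X subX spanX]]].
  exists set0; first exact: sub0set.
  by rewrite symdiffxx; apply: jacobi_span0.
have [Y subY spanY] := stab0_reduction_perm s.
exists (symdiff Y X).
  apply/subsetP => t; rewrite in_symdiff.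
  by case: (boolP (t \in Y)) => [/(subsetP subY) | _ /(subsetP subX)].
rewrite (_ : symdiff _ _ = symdiff (symdiff [set s] Y) (symdiff [set t in r] X)).
  exact: jacobi_span_symdiff.
apply/setP => t; rewrite !in_symdiff !inE.
have [-> | _] := eqVneq t s; last by rewrite addbCA.
by rewrite (negbTE s_r) /= negb_add.
Qed.

Lemma F2_natr_addb (b1 b2 : bool) : ((b1 (+) b2)%:R : 'F_2) = b1%:R + b2%:R.
Proof. by case: b1; case: b2; rewrite /= ?addr0 ?add0r //; apply/eqP. Qed.

Lemma lie_algebra_F2_ring (L : lmodType 'F_2) (br : L -> L -> L) :
  is_lie_algebra_F2 br -> is_lie_ring br.
Proof.
case=> brDl brDr brxx br_jacobi; split=> // x y z.
  by have := brDl 1 x y z; rewrite !scale1r.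
by have := brDr 1 x y z; rewrite !scale1r.
Qed.

Section TwoJacobi.
Variable n : nat.
Implicit Types T U : {set {perm 'I_n}}.

Lemma jacobi_set_jacobi2 T : jacobi_set T -> jacobi2_set T.
Proof. by move=> jacT L br /lie_algebra_F2_ring; apply: jacT. Qed.

Lemma jacobi_sum_indicator (L : lmodType 'F_2) (br : L -> L -> L) T a :
  jacobi_sum br T a = \sum_s (s \in T)%:R *: lnbr br [seq a (s i) | i <- enum 'I_n].
Proof.
rewrite [LHS]big_mkcond; apply: eq_bigr => s _.
by case: (s \in T); rewrite ?scale1r ?scale0r.
Qed.

Lemma jacobi2_symdiff T U : jacobi2_set T -> jacobi2_set U -> jacobi2_set (symdiff T U).
Proof.
move=> jacT jacU L br lieL a; have := jacT L br lieL a; have := jacU L br lieL a.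
rewrite !jacobi_sum_indicator => sumU sumT.
under eq_bigr => s _ do rewrite in_symdiff F2_natr_addb scalerDl.
by rewrite big_split /= sumT sumU addr0.
Qed.

Lemma jacobi_span_jacobi2 T : jacobi_span T -> jacobi2_set T.
Proof.
case=> Ts + ->; elim: Ts => [_ L br _ a | U Ts IHTs jacTs] /=.
  by rewrite /jacobi_sum big_set0.
apply: jacobi2_symdiff; first by apply/jacobi_set_jacobi2/jacTs; rewrite mem_head.
by apply: IHTs => V V_Ts; apply: jacTs; rewrite in_cons V_Ts orbT.
Qed.

End TwoJacobi.

Lemma commr_jacobi (R : pzRingType) (x y z : R) :
  x * (y * z - z * y) - (y * z - z * y) * x + (y * (z * x - x * z) - (z * x - x * z) * y)
  + (z * (x * y - y * x) - (x * y - y * x) * z) = 0.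
Proof.
rewrite !mulrBr !mulrBl !mulrA !opprB !addrA !subrK.
rewrite (addrAC _ (- (y * x * z)) (x * z * y)) (addrAC _ (z * y * x)) subrK.
by rewrite (addrAC _ (- (y * x * z))) addrK subrK subrr.
Qed.

Section CommutatorBracket.
Variable A : algType 'F_2.

Definition commr_br (x y : A) := x * y - y * x.

Lemma commr_br_lie : is_lie_algebra_F2 commr_br.
Proof.
rewrite /commr_br; split=> [c x y z | c x y z | x | x y z]; last exact: commr_jacobi.
- by rewrite mulrDl mulrDr -scalerAl -scalerAr scalerBr opprD addrACA.
- by rewrite mulrDl mulrDr -scalerAl -scalerAr scalerBr opprD addrACA.
- exact: subrr.
Qed.

End CommutatorBracket.

Lemma mulmx_deltaE (R : pzSemiRingType) m n p (M : 'M[R]_(m, n)) (j : 'I_n) (k : 'I_p) i l :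
  (M *m delta_mx j k) i l = M i j * (l == k)%:R.
Proof.
rewrite mxE (bigD1 j) //= big1 ?addr0 => [|j' /negbTE j'j]; first by rewrite mxE eqxx.
by rewrite mxE j'j mulr0.
Qed.

Lemma delta_mulmxE (R : pzSemiRingType) m n p (M : 'M[R]_(n, p)) (j : 'I_m) (k : 'I_n) i l :
  (delta_mx j k *m M) i l = (i == j)%:R * M k l.
Proof.
rewrite mxE (bigD1 k) //= big1 ?addr0 => [|k' /negbTE k'k]; first by rewrite mxE eqxx andbT.
by rewrite mxE k'k andbF mul0r.
Qed.

Section Independence.
Variables (n : nat) (sg : {perm 'I_n.+1}).
Local Notation pos i := (nat_of_ord (sg^-1 i)%g).

Definition step_mx (i : 'I_n.+1) : 'M['F_2]_n.+2 :=
  delta_mx (widen_ord (leqnSn _) (sg^-1 i)%g) (lift ord0 (sg^-1 i)%g).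

(* Row 0 of [M, E_(k, k+1)] is row 0 of M E_(k, k+1) as long as k != 0, so along
   a left-normed bracket row 0 only moves from e_k to e_(k+1) when the next letter
   sits at position k of the word of sg. *)
Lemma row0_lnbr_step l (M : 'M['F_2]_n.+2) k b :
  (forall c : 'I_n.+2, M ord0 c = (b && (c == k :> nat))%:R) ->
  sg ord0 \notin l ->
  forall c : 'I_n.+2, (foldl (@commr_br _) M (map step_mx l)) ord0 c =
    [&& b, [seq pos i | i <- l] == iota k (size l) & c == (k + size l)%N :> nat]%:R.
Proof.
elim: l M k b => [|i l IHl] M k b M_row0 /=; first by move=> _ c; rewrite M_row0 addn0.
rewrite in_cons negb_or => /andP[i_neq sg0_l] c.
rewrite (IHl _ k.+1 (b && (pos i == k))) ?eqseq_cons -?andbA ?addSnnS // => c'.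
rewrite /commr_br mxE -!mulmxE /step_mx mulmx_deltaE mxE delta_mulmxE M_row0.
have -> : (ord0 == widen_ord (leqnSn _) (sg^-1 i)%g) = false.
  apply: contraNF i_neq => /eqP/(congr1 val) /= pos_i.
  by apply/eqP; rewrite -[i](permKV sg); congr (sg _); apply: val_inj.
rewrite mul0r subr0 -natrM mulnb /=; case: eqP => [pos_i | _]; last by rewrite andbF.
by rewrite -val_eqE /= /bump leq0n add1n pos_i.
Qed.

Hypothesis sg0 : sg ord0 = ord0.

Let pos_inj : injective (fun i => pos i).
Proof. by move=> i j /val_inj /perm_inj. Qed.

Let map_pos_perm_word : [seq pos i | i <- perm_word sg] = iota 0 n.+1.
Proof. by rewrite /perm_word -map_comp -val_enum_ord; apply: eq_map => i /=; rewrite permK. Qed.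

Let sgV0 : (sg^-1 ord0)%g = ord0.
Proof. by rewrite -{1}sg0 permK. Qed.

Lemma lnbr_step_mx (t : {perm 'I_n.+1}) : t ord0 = ord0 ->
  (lnbr (@commr_br _) (map step_mx (perm_word t))) ord0 ord_max = (t == sg)%:R.
Proof.
move=> t0; set l := [seq t (lift ord0 i) | i <- enum 'I_n].
have word_t : perm_word t = ord0 :: l by rewrite perm_word_cons t0.
have ord0_l : ord0 \notin l.
  by have := perm_word_uniq t; rewrite word_t => /andP[].
have pos_l : ([seq pos i | i <- l] == iota 1 n) = (t == sg).
  rewrite -(inj_eq (@perm_word_inj _)) -(inj_eq (inj_map pos_inj)) map_pos_perm_word.
  by rewrite word_t /= sgV0 eqseq_cons.
rewrite word_t (@row0_lnbr_step _ _ 1 true) ?sg0 // => [|c].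
  by rewrite size_map size_enum_ord eqxx andbT pos_l.
by rewrite mxE sgV0 -!val_eqE /= /bump.
Qed.

End Independence.

Lemma jacobi2_stab0_eq0 n (X : {set {perm 'I_n.+1}}) :
  X \subset stab0 n -> jacobi2_set X -> X = set0.
Proof.
move=> subX jacX; apply/eqP/negPn/negP => /set0Pn[sg sg_X].
have X0 t : t \in X -> t ord0 = ord0 by move/(subsetP subX); rewrite inE => /eqP.
have := jacX _ (@commr_br _) (commr_br_lie _) (step_mx sg).
move/(congr1 (fun M : 'M['F_2]_n.+2 => M ord0 ord_max)); rewrite jacobi_sumE summxE mxE.
rewrite (eq_bigr (fun t => (t == sg)%:R)) => [|t t_X]; last first.
  exact: (lnbr_step_mx (X0 _ sg_X) (X0 _ t_X)).
by rewrite (bigD1 sg) //= eqxx big1 ?addr0 => [|t /andP[_ /negbTE ->]].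
Qed.

Local Close Scope ring_scope.

Theorem corollary3 (n : nat) (hn : 2 <= n) (T : {set {perm 'I_n}}) :
  jacobi2_set T ->
  exists Ts : seq {set {perm 'I_n}},
    (forall U, U \in Ts -> jacobi_set U) /\ T = symdiff_seq Ts.
Proof.
case: n hn T => [|[|m]] // _ T jacT.
have [X subX spanTX] := stab0_reduction T.
have jacX : jacobi2_set X.
  rewrite -(symdiffKl T X); exact: jacobi2_symdiff jacT (jacobi_span_jacobi2 spanTX).
move: spanTX; rewrite (jacobi2_stab0_eq0 subX jacX) symdiffs0 => -[Ts jacTs ->].
by exists Ts.
Qed.
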